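(* For any $\varepsilon>0$ (and any $\gamma>1$) there exist instances with outcomes satisfying UPRF such that: one such outcome is not $\left(\frac{3+\sqrt{17}}{2}-\varepsilon\right)$-proportionally fair; one such outcome does not satisfy $(3-\varepsilon)$-individual fairness; and one such outcome is not in the $\left(\gamma,\frac{\gamma+1}{\gamma-1}-\varepsilon\right)$-transferable core.
   Context: Let $(\mathcal X,d)$ be a metric space, $N=[n]$ a set of agents and $C$ a set of candidates located in $\mathcal X$, $k\in\mathbb N^+$; an outcome is $W\subseteq C$ with $|W|\le k$; $B(i,r)=\{x\in\mathcal X:d(i,x)\le r\}$; $d(i,W)=\min_{c\in W}d(i,c)$. UPRF: there are no $\ell\in\mathbb N$, no $N'\subseteq N$ with $|N'|\ge\ell n/k$, and no $y\in\mathbb R$ with $\max_{i,i'\in N'}d(i,i')\le y$ and $|\bigcup_{i\in N'}B(i,y)\cap W|<\ell$. $\alpha$-proportional fairness: there is no $N'\subseteq N$ with $|N'|\ge n/k$ and $c\in C\setminus W$ with $\alpha\,d(i,c)<d(i,W)$ for all $i\in N'$. $\beta$-individual fairness: $d(i,W)\le\beta\,r(i)$ for all $i\in N$, where $r(i)=\min\{r: |B(i,r)\cap N|\ge n/k\}$. $(\gamma,\alpha)$-transferable core: there is no $N'\subseteq N$ and $c\in C\setminus W$ with $|N'|\ge\gamma n/k$ and $\alpha\sum_{i\in N'}d(i,c)<\sum_{i\in N'}d(i,W)$. *)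

From mathcomp Require Import all_boot all_order all_algebra.
From mathcomp Require Import reals.
Set Implicit Arguments. Unset Strict Implicit. Unset Printing Implicit Defensive.
Import Order.TTheory GRing.Theory Num.Theory.
Local Open Scope ring_scope.

Section Defs.
Variables (R : realType) (X : Type) (d : X -> X -> R).

Definition is_metric : Prop :=
  [/\ forall x y, 0 <= d x y,
      forall x y, d x y = 0 <-> x = y,
      forall x y, d x y = d y x &
      forall x y z, d x z <= d x y + d y z].

Variables (n m : nat) (a : 'I_n -> X) (cl : 'I_m -> X).
(* agents are 'I_n located at a i; candidates are 'I_m located at cl c. *)

Definition outcome (k : nat) (W : {set 'I_m}) : Prop := (#|W| <= k)%N.

(* d(x, W) = min_{c in W} d(x, c)  (convention: 0 if W is empty) *)
Definition distW (x : X) (W : {set 'I_m}) : R :=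
  match [pick c in W] with
  | Some c0 => d x (cl (Order.arg_min c0 (fun c => c \in W) (fun c => d x (cl c))))
  | None => 0
  end.

Definition UPRF (k : nat) (W : {set 'I_m}) : Prop :=
  ~ exists (l : nat) (N' : {set 'I_n}) (y : R),
      [/\ (l%:R * n%:R / k%:R <= #|N'|%:R :> R),
          (forall i i', i \in N' -> i' \in N' -> d (a i) (a i') <= y) &
          (#|[set c in W | [exists i in N', (d (a i) (cl c) <= y)%R]]| < l)%N].

Definition prop_fair (k : nat) (alpha : R) (W : {set 'I_m}) : Prop :=
  ~ exists (N' : {set 'I_n}) (c : 'I_m),
      [/\ n%:R / k%:R <= #|N'|%:R :> R, c \notin W &
          forall i, i \in N' -> alpha * d (a i) (cl c) < distW (a i) W].

Definition ball_ok (k : nat) (i : 'I_n) (r : R) : Prop :=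
  n%:R / k%:R <= #|[set j : 'I_n | (d (a i) (a j) <= r)%R]|%:R :> R.

Definition is_rad (k : nat) (i : 'I_n) (r : R) : Prop :=
  ball_ok k i r /\ forall r', ball_ok k i r' -> r <= r'.

Definition indiv_fair (k : nat) (beta : R) (W : {set 'I_m}) : Prop :=
  forall i r, is_rad k i r -> distW (a i) W <= beta * r.

Definition trans_core (k : nat) (gamma alpha : R) (W : {set 'I_m}) : Prop :=
  ~ exists (N' : {set 'I_n}) (c : 'I_m),
      [/\ c \notin W, gamma * n%:R / k%:R <= #|N'|%:R &
          alpha * (\sum_(i in N') d (a i) (cl c)) < \sum_(i in N') distW (a i) W].

End Defs.

(* In each instance UPRF holds because every group large enough to be entitled to
   a winner has diameter large enough to reach one.
   - Proportional fairness: in the taxicab plane, three agents (-2,0), (2,0),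
     (0,s-3) with s = sqrt 17, the winner at (0,s+1) and the loser at (0,0); every
     agent is exactly (3+s)/2 times closer to the loser than to the winner.
   - Individual fairness: agents at -1, 0, 1 on a line and the single winner at 3;
     the middle agent has radius 1 but distance 3.
   - Transferable core: a metric with values in {1,2}; P agents sit on an unchosen
     candidate while all k winners sit at a common point at distance 2 from it and
     at distance 1 from every other (isolated) agent. Adding about (gamma-1)(P+1)
     isolated agents gives a coalition of size gamma n/k whose cost ratio
     (2P+q)/q tends to (gamma+1)/(gamma-1) as P grows. *)

From mathcomp Require Import all_boot all_order all_algebra.
From mathcomp Require Import reals.
From mathcomp Require Import ring lra.
Import Order.TTheory GRing.Theory Num.Theory.
Local Open Scope ring_scope.

Lemma big_ord_prefix (T : Type) (idx : T) (op : Monoid.law idx) (n M : nat)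
    (F : nat -> T) : (M <= n)%N ->
  \big[op/idx]_(i in [set i : 'I_n | (i < M)%N]) F i = \big[op/idx]_(0 <= i < M) F i.
Proof.
move=> le_Mn; rewrite (eq_bigl (fun i : 'I_n => (i < M)%N)) => [|i]; last by rewrite inE.
by rewrite (big_ord_narrow le_Mn) big_mkord.
Qed.

Lemma card_ord_prefix (n M : nat) : (M <= n)%N -> #|[set i : 'I_n | (i < M)%N]| = M.
Proof.
move=> le_Mn; rewrite -sum1_card (@big_ord_prefix _ _ _ _ _ (fun=> 1%N)) //.
by rewrite sum_nat_const_nat muln1 subn0.
Qed.

Lemma sumr_prefix_split (V : nmodType) (P q : nat) (u v : V) :
  \sum_(0 <= i < P + q) (if (i < P)%N then u else v) = u *+ P + v *+ q.
Proof.
rewrite (big_cat_nat (n := P)) ?leq_addr //=.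
rewrite (eq_big_nat _ _ (F2 := fun=> u)) => [|i /andP[_ iP]]; last by rewrite iP.
rewrite (eq_big_nat _ _ (m := P) (F2 := fun=> v)) => [|i /andP[Pi _]].
  by rewrite !sumr_const_nat subn0 addKn.
by rewrite ltnNge Pi.
Qed.

Lemma metric_of_dist_in_12 (R : realType) (T : eqType) (d : T -> T -> R) :
  (forall x, d x x = 0) -> (forall x y, d x y = d y x) ->
  (forall x y, x != y -> 1 <= d x y <= 2) -> is_metric d.
Proof.
move=> d0 dC d12.
have d_ge0 x y : 0 <= d x y.
  by case: (eqVneq x y) => [->|/d12/andP[]]; rewrite ?d0 //; lra.
split=> // [x y|x y z].
  by split=> [|->] //; apply: contra_eq => /d12/andP[]; lra.
case: (eqVneq x z) => [->|/d12/andP[_ xz]]; first by rewrite d0 addr_ge0.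
case: (eqVneq x y) => [->|/d12/andP[xy _]]; first by rewrite d0 add0r.
case: (eqVneq y z) => [->|/d12/andP[yz _]]; first by rewrite d0 addr0.
lra.
Qed.

Section Outcomes.
Variables (R : realType) (X : Type) (d : X -> X -> R).
Variables (n m : nat) (a : 'I_n -> X) (cl : 'I_m -> X).

Lemma distW_colocated (W : {set 'I_m}) (p x : X) :
  W != set0 -> (forall c, c \in W -> cl c = p) -> distW d cl x W = d x p.
Proof.
case/set0Pn=> c Wc Wp; rewrite /distW.
case: pickP => [c0 Wc0|]; last by move/(_ c); rewrite Wc.
by case: arg_minP => // j Wj _; rewrite Wp.
Qed.

Lemma UPRF_of_close_agent (k : nat) (W : {set 'I_m}) :
  (0 < n)%N -> (0 < k)%N -> #|W| = k ->
  (forall (N' : {set 'I_n}) (y : R), n%:R / k%:R <= #|N'|%:R :> R ->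
     (forall i i', i \in N' -> i' \in N' -> d (a i) (a i') <= y) ->
     exists2 i, i \in N' & forall c, c \in W -> d (a i) (cl c) <= y) ->
  UPRF d a cl k W.
Proof.
move=> n_gt0 k_gt0 cardW close [l [N' [y [large diam few]]]].
have l_gt0 : (0 < l)%N by case: l few {large}.
have [i N'i iW] : exists2 i, i \in N' & forall c, c \in W -> d (a i) (cl c) <= y.
  by apply: close diam; apply: le_trans large; rewrite -mulrA ler_peMl ?divr_ge0 ?ler1n.
suff : [set c in W | [exists i in N', d (a i) (cl c) <= y]] = W.
  move=> E; move: few; rewrite E cardW ltnNge => /negP; apply.
  have : l%:R * n%:R <= (k * #|N'|)%:R :> R.
    by rewrite natrM [X in _ <= X]mulrC -ler_pdivrMr ?ltr0n.
  rewrite -natrM ler_nat => /leq_trans/(_ (leq_mul (leqnn k) (max_card N'))).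
  by rewrite card_ord leq_pmul2r.
apply/setP=> c; rewrite inE; case Wc: (c \in W) => //=.
by apply/exists_inP; exists i => //; apply: iW.
Qed.

Lemma UPRF_single_winner (c0 : 'I_m) :
  (0 < n)%N ->
  (forall y : R, (forall i i', d (a i) (a i') <= y) -> exists i, d (a i) (cl c0) <= y) ->
  UPRF d a cl 1 [set c0].
Proof.
move=> n_gt0 close; apply: UPRF_of_close_agent => //; first exact: cards1.
move=> N' y; rewrite divr1 ler_nat => large diam.
have N'T : N' = [set: 'I_n].
  by apply/eqP; rewrite eqEcard subsetT cardsT card_ord.
have [|i iW] := close y; first by move=> i i'; apply: diam; rewrite N'T.
by exists i; [rewrite N'T | move=> c /set1P ->].
Qed.
End Outcomes.

Definition taxicab (R : realType) (p q : R * R) : R := `|p.1 - q.1| + `|p.2 - q.2|.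

Lemma taxicab_metric (R : realType) : is_metric (@taxicab R).
Proof.
rewrite /taxicab; split=> [x y|[x1 x2] [y1 y2] /=|x y|x y z].
- by rewrite addr_ge0.
- split=> [/eqP|[-> ->]]; last by rewrite !subrr normr0 addr0.
  by rewrite paddr_eq0 // !normr_eq0 !subr_eq0 => /andP[/eqP-> /eqP->].
- by rewrite (distrC x.1) (distrC x.2).
- by rewrite addrACA lerD ?ler_distD.
Qed.

Ltac taxicab_norms :=
  rewrite /taxicab /=;
  repeat match goal with |- context[`|?t|] =>
    first [ rewrite (ger0_norm (_ : 0 <= t)); last by lra
          | rewrite (ler0_norm (_ : t <= 0)); last by lra ] end.

Section Tripod.
Variable R : realType.
Let s : R := Num.sqrt 17.

Lemma sqr_sqrt17 : s ^+ 2 = 17.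
Proof. by rewrite sqr_sqrtr. Qed.

Lemma sqrt17_gt3 : 3 < s.
Proof. by rewrite -(ltr_pXn2r (n := 2)) ?sqr_sqrt17 ?nnegrE ?sqrtr_ge0 //; lra. Qed.

Definition tripod_agent (i : 'I_3) : R * R :=
  match val i with 0 => (-2, 0) | 1 => (2, 0) | _ => (0, s - 3) end.

Definition tripod_cand (c : 'I_2) : R * R := if c == ord0 then (0, s + 1) else (0, 0).

Lemma tripod_UPRF : UPRF (@taxicab R) tripod_agent tripod_cand 1 [set ord0].
Proof.
have s_gt3 := sqrt17_gt3.
apply: UPRF_single_winner => // y diam; exists (@Ordinal 3 2 isT).
have := diam (@Ordinal 3 0 isT) (@Ordinal 3 1 isT).
rewrite /tripod_agent /tripod_cand /=; taxicab_norms; lra.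
Qed.

Lemma tripod_not_prop_fair (eps : R) : 0 < eps ->
  ~ prop_fair (@taxicab R) tripod_agent tripod_cand 1 ((3 + s) / 2 - eps) [set ord0].
Proof.
move=> eps_gt0; have s2 := sqr_sqrt17; have s_gt3 := sqrt17_gt3.
apply; exists setT, (@Ordinal 2 1 isT); split.
- by rewrite cardsT card_ord divr1.
- by rewrite inE.
move=> i _; rewrite (@distW_colocated _ _ _ _ _ _ (0, s + 1)); last first.
- by move=> c /set1P ->.
- by apply/set0Pn; exists ord0; rewrite inE.
have : 0 < eps * (s - 3) by rewrite mulr_gt0 // subr_gt0.
rewrite /tripod_agent /tripod_cand /=.
case: i => [[|[|[|//]]] ?] /=; taxicab_norms; nra.
Qed.

End Tripod.

Section Segment.
Variable R : realType.

Definition segment_agent (i : 'I_3) : R * R :=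
  match val i with 0 => (0, 0) | 1 => (-1, 0) | _ => (1, 0) end.

Definition segment_cand (c : 'I_1) : R * R := (3, 0).

Lemma segment_UPRF : UPRF (@taxicab R) segment_agent segment_cand 1 [set ord0].
Proof.
apply: UPRF_single_winner => // y diam; exists (@Ordinal 3 2 isT).
have := diam (@Ordinal 3 1 isT) (@Ordinal 3 2 isT).
rewrite /segment_agent /segment_cand /=; taxicab_norms; lra.
Qed.

Lemma segment_center_radius : is_rad (@taxicab R) segment_agent 1 ord0 1.
Proof.
split=> [|r]; rewrite /ball_ok divr1 ler_nat.
  rewrite -[X in (X <= _)%N](card_ord 3) -cardsT subset_leq_card //.
  apply/subsetP=> j _; rewrite inE /segment_agent.
  by case: j => [[|[|[|//]]] ?] /=; taxicab_norms; lra.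
apply: contraLR; rewrite -ltNge -ltnNge => r_lt1.
apply: (@leq_ltn_trans #|[set (ord0 : 'I_3)]|); last by rewrite cards1.
apply/subset_leq_card/subsetP=> j; rewrite !inE /segment_agent.
by case: j => [[|[|[|//]]] ?] //=; taxicab_norms => ?; exfalso; lra.
Qed.

Lemma segment_not_indiv_fair (eps : R) : 0 < eps ->
  ~ indiv_fair (@taxicab R) segment_agent segment_cand 1 (3 - eps) [set ord0].
Proof.
move=> eps_gt0 /(_ ord0 1 segment_center_radius).
rewrite (@distW_colocated _ _ _ _ _ _ (3, 0)) //.
  by rewrite /segment_agent /=; taxicab_norms; lra.
by apply/set0Pn; exists ord0; rewrite inE.
Qed.

End Segment.

Section Cluster.
Variable R : realType.

Definition side_dist (x y : nat) : R :=
  if x == y then 0 else if (x <= 1)%N == (y <= 1)%N then 2 else 1.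

Lemma side_dist_metric : is_metric side_dist.
Proof.
apply: metric_of_dist_in_12 => [x|x y|x y /negbTE xy]; rewrite /side_dist ?eqxx //.
  by rewrite eq_sym [((y <= 1)%N == _)]eq_sym.
by rewrite xy; case: ifP => _; apply/andP; split; lra.
Qed.

Variables (P q : nat).
Let k := (P + q)%N.
Let n := (k * P.+1)%N.

Definition cluster_agent (i : 'I_n) : nat := if (i < P)%N then 0%N else i.+2.

Definition cluster_cand (c : 'I_k.+1) : nat := if c == ord0 then 0%N else 1%N.

Lemma cluster_quota : (0 < P)%N -> n%:R / k%:R = P.+1%:R :> R.
Proof.
by move=> P_gt0; rewrite natrM mulrAC divff ?mul1r // pnatr_eq0 -lt0n addn_gt0 P_gt0.
Qed.

Lemma cluster_UPRF : (0 < P)%N -> UPRF side_dist cluster_agent cluster_cand k [set~ ord0].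
Proof.
move=> P_gt0; have k_gt0 : (0 < k)%N by rewrite addn_gt0 P_gt0.
apply: UPRF_of_close_agent; rewrite ?muln_gt0 ?k_gt0 ?cardsC1 ?card_ord //.
move=> N' y; rewrite cluster_quota // ler_nat => large diam.
have [i0 N'i0 far_i0] : exists2 i0, i0 \in N' & ~~ (i0 < P)%N.
  apply/exists_inP; apply: contraTT (large) => /exists_inPn near; rewrite -ltnNge ltnS.
  have le_Pn : (P <= n)%N by apply: leq_trans (leq_addr q P) (leq_pmulr _ _).
  rewrite -[X in (_ <= X)%N](@card_ord_prefix n P) //.
  by apply/subset_leq_card/subsetP=> i /near; rewrite inE negbK.
have [j N'j j_neq_i0] : exists2 j, j \in N' & j != i0.
  have : (0 < #|N' :\ i0|)%N.
    by move: large; rewrite (cardsD1 i0 N') N'i0 ltnS; apply: leq_trans.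
  by case/card_gt0P=> j; rewrite !inE => /andP[]; exists j.
have y_ge1 : 1 <= y.
  apply: le_trans (diam _ _ N'i0 N'j).
  rewrite /side_dist /cluster_agent (negbTE far_i0).
  have -> : (i0.+2 == (if (j < P)%N then 0 else j.+2))%N = false.
    by case: ifP => // _; rewrite eqSS eq_sym; exact: negbTE j_neq_i0.
  by case: ifP => _; lra.
exists i0 => // c; rewrite !inE /cluster_cand => /negbTE ->.
by rewrite /side_dist /cluster_agent (negbTE far_i0).
Qed.

Lemma cluster_not_trans_core (gamma alpha : R) : (0 < P)%N ->
  gamma * P.+1%:R <= (P + q)%:R -> alpha * q%:R < 2 * P%:R + q%:R ->
  ~ trans_core side_dist cluster_agent cluster_cand k gamma alpha [set~ ord0].
Proof.
move=> P_gt0 large cheap; have k_gt0 : (0 < k)%N by rewrite addn_gt0 P_gt0.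
apply; exists [set i : 'I_n | (i < k)%N], ord0; split.
- by rewrite !inE eqxx.
- by rewrite -mulrA cluster_quota // card_ord_prefix //; apply: leq_pmulr.
have dist_c0 (i : 'I_n) : side_dist (cluster_agent i) (cluster_cand ord0)
    = if (i < P)%N then 0 else 1.
  by rewrite /cluster_agent /cluster_cand eqxx /side_dist; case: (i < P)%N.
have dist_W (i : 'I_n) : distW side_dist cluster_cand (cluster_agent i) [set~ ord0]
    = if (i < P)%N then 2 else 1.
  rewrite (@distW_colocated _ _ _ _ _ _ 1%N); first last.
  - by move=> c; rewrite !inE /cluster_cand => /negbTE ->.
  - by apply/set0Pn; exists (Ordinal (k_gt0 : 1 < k.+1)%N); rewrite !inE.
  by rewrite /cluster_agent /side_dist; case: (i < P)%N.
rewrite (eq_bigr _ (fun i _ => dist_c0 i)) (eq_bigr _ (fun i _ => dist_W i)).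
rewrite (@big_ord_prefix _ _ _ _ _ (fun i => if (i < P)%N then 0 else 1)) ?leq_pmulr //.
rewrite (@big_ord_prefix _ _ _ _ _ (fun i => if (i < P)%N then 2 else 1)) ?leq_pmulr //.
by rewrite !sumr_prefix_split mul0rn add0r -[2 *+ P]mulr_natr.
Qed.
End Cluster.

Lemma exists_cluster_sizes (R : realType) (gamma alpha : R) :
  1 < gamma -> alpha < (gamma + 1) / (gamma - 1) ->
  exists P q : nat,
    [/\ (0 < P)%N, gamma * P.+1%:R <= (P + q)%:R & alpha * q%:R < 2 * P%:R + q%:R].
Proof.
move=> gamma_gt1; rewrite ltr_pdivlMr ?subr_gt0 // => alpha_lt.
(* [q] is the least integer above gamma (P + 1) - P, and the positive slack
   [delta] absorbs the rounding once [P] is large. *)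
pose delta := 2 - (alpha - 1) * (gamma - 1).
have delta_gt0 : 0 < delta by rewrite /delta; lra.
pose P := (Num.truncn ((alpha - 1) * (gamma + 1) / delta)).+1.
have P_large : (alpha - 1) * (gamma + 1) < delta * P%:R.
  by rewrite [delta * _]mulrC -ltr_pdivrMr // truncnS_gt.
pose x := (gamma - 1) * P%:R + gamma.
have x_ge0 : 0 <= x by rewrite addr_ge0 ?mulr_ge0 ?subr_ge0 //; lra.
pose q := (Num.truncn x).+1.
have [x_lt_q q_le_x1] : x < q%:R /\ q%:R <= x + 1.
  by split; [exact: truncnS_gt | rewrite /q -addn1 natrD lerD2r truncn_le].
have P_ge1 : 1 <= P%:R :> R by rewrite ler1n.
exists P, q; split=> //.
  by rewrite -addn1 !natrD mulrDr mulr1; move: x_lt_q; rewrite /x; lra.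
rewrite -ltrBlDr -[X in _ - X]mul1r -mulrBl.
have [alpha_le1|alpha_gt1] := lerP alpha 1.
  by apply: le_lt_trans (_ : 0 < 2 * P%:R); [rewrite mulr_le0_ge0 ?subr_le0 | lra].
apply: le_lt_trans (_ : (alpha - 1) * (x + 1) < _); first by rewrite ler_pM2l ?subr_gt0.
move: P_large; rewrite /x /delta; nra.
Qed.

Theorem theorem7 (R : realType) (eps gamma : R) :
  0 < eps -> 1 < gamma ->
  [/\ (exists (X : Type) (d : X -> X -> R) (n m k : nat)
             (a : 'I_n -> X) (cl : 'I_m -> X) (W : {set 'I_m}),
          [/\ is_metric d, (0 < n)%N /\ (0 < k)%N, outcome k W,
              UPRF d a cl k W &
              ~ prop_fair d a cl k ((3 + Num.sqrt 17) / 2 - eps) W]),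
      (exists (X : Type) (d : X -> X -> R) (n m k : nat)
             (a : 'I_n -> X) (cl : 'I_m -> X) (W : {set 'I_m}),
          [/\ is_metric d, (0 < n)%N /\ (0 < k)%N, outcome k W,
              UPRF d a cl k W &
              ~ indiv_fair d a cl k (3 - eps) W]) &
      (exists (X : Type) (d : X -> X -> R) (n m k : nat)
             (a : 'I_n -> X) (cl : 'I_m -> X) (W : {set 'I_m}),
          [/\ is_metric d, (0 < n)%N /\ (0 < k)%N, outcome k W,
              UPRF d a cl k W &
              ~ trans_core d a cl k gamma ((gamma + 1) / (gamma - 1) - eps) W])].
Proof.
move=> eps_gt0 gamma_gt1; split.
- exists (R * R)%type, (@taxicab R), 3%N, 2%N, 1%N,
    (tripod_agent R), (tripod_cand R), [set ord0].
  split; rewrite /outcome ?cards1 //.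
  + exact: taxicab_metric.
  + exact: tripod_UPRF.
  + exact: tripod_not_prop_fair.
- exists (R * R)%type, (@taxicab R), 3%N, 1%N, 1%N,
    (segment_agent R), (segment_cand R), [set ord0].
  split; rewrite /outcome ?cards1 //.
  + exact: taxicab_metric.
  + exact: segment_UPRF.
  + exact: segment_not_indiv_fair.
have [|P [q [P_gt0 large cheap]]] :=
  @exists_cluster_sizes R gamma ((gamma + 1) / (gamma - 1) - eps) gamma_gt1.
  by rewrite ltrBlDr ltrDl.
exists nat, (@side_dist R), ((P + q) * P.+1)%N, (P + q).+1, (P + q)%N,
  (cluster_agent P q), (cluster_cand P q), [set~ ord0].
split; rewrite /outcome ?cardsC1 ?card_ord ?muln_gt0 ?addn_gt0 ?P_gt0 //.
- exact: side_dist_metric.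
- exact: cluster_UPRF.
- exact: cluster_not_trans_core.
Qed.
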